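(* Let $k\ge1$, $m=2k$, and $R_m^+(\hat K)=P_m(\hat K)+\mathrm{span}\{\hat x^m\hat y,\ \hat x\hat y^m\}$. If $\hat v\in R_m^+(\hat K)$ vanishes at all points of $G^+\cup I^+\cup\{(1,1)\}$, then $\hat v\equiv 0$.
   Context: $\hat K=[-1,1]^2$; $P_n(\hat K)$ is the space of polynomials of total degree $\le n$. Let $g_{\pm1},\dots,g_{\pm k}$ be the $2k$ zeros of the Legendre polynomial of degree $2k$ on $[-1,1]$ ($g_{-i}=-g_i$). $G^+=\{(1,g_i),(-1,g_i),(g_i,1),(g_i,-1): i\in\{-k,\dots,k\}\setminus\{0\}\}$. $I^+$ is a set of $(2k-3)(k-1)$ interior points of $\hat K$ unisolvent for $P_{2k-4}(\hat K)$ (every polynomial in $P_{2k-4}(\hat K)$ is uniquely determined by its values on $I^+$); $I^+=\emptyset$ when $k=1$. *)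

(* Bivariate polynomials are represented as {poly {poly R}}:
   the outer variable is y, the coefficients are polynomials in x. *)
From HB Require Import structures.
From mathcomp Require Import all_boot all_order all_algebra.
Set Implicit Arguments. Unset Strict Implicit. Unset Printing Implicit Defensive.
Import Order.TTheory GRing.Theory Num.Theory.
Local Open Scope ring_scope.

Section Defs.
Variable R : realFieldType.

Definition legendre (n : nat) : {poly R} :=
  ((2 ^ n * n`!)%N%:R)^-1 *: (derivn n (('X ^+ 2 - 1) ^+ n)).

Definition eval2 (p : {poly {poly R}}) (x y : R) : R := (p.[y%:P]).[x].

Definition coef2 (p : {poly {poly R}}) (i j : nat) : R := (p`_j)`_i.

Definition in_Pn (n : nat) (p : {poly {poly R}}) : Prop :=
  forall i j : nat, (n < i + j)%N -> coef2 p i j = 0.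

Definition in_Rplus (m : nat) (v : {poly {poly R}}) : Prop :=
  exists (p : {poly {poly R}}) (a b : R),
    in_Pn m p /\
    v = p + a%:P%:P * (('X ^+ m)%:P * 'X) + b%:P%:P * (('X)%:P * 'X ^+ m).

Definition Gplus (g : seq R) : seq (R * R) :=
  flatten [seq [:: (1, t); (-1, t); (t, 1); (t, -1)] | t <- g].

Definition interior (pt : R * R) : bool :=
  (-1 < pt.1 < 1) && (-1 < pt.2 < 1).

Definition unisolvent (n : nat) (I : seq (R * R)) : Prop :=
  forall p q : {poly {poly R}}, in_Pn n p -> in_Pn n q ->
    (forall pt, pt \in I -> eval2 p pt.1 pt.2 = eval2 q pt.1 pt.2) -> p = q.

End Defs.

(* The proof follows the classical "bubble" argument:
   - every v in R_m^+ has degree <= m in x and in y separately, and its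
     monomials x^i y^j with i, j >= 2 all have total degree <= m;
   - the Legendre polynomial P_m satisfies P_m(1) = 1, so 1 is not among
     its zeros g, and 1 :: g gives m+1 distinct nodes on every edge; going
     round the edges x = 1, y = 1, x = -1, y = -1 (each edge reusing a
     corner obtained from the previous ones) v vanishes on the boundary;
   - hence v = (x^2-1)(y^2-1) w, and a descent on the coefficients shows
     that w has total degree <= m - 4;
   - for k = 1 this forces w = 0; for k >= 2, w vanishes on the interior
     points I^+ (where the bubble factor is nonzero), so w = 0 by
     unisolvence of I^+ for P_{2k-4}. *)

From mathcomp Require Import all_boot all_order all_algebra.
From mathcomp Require Import zify ring lra.
Import Order.TTheory GRing.Theory Num.Theory.
Local Open Scope ring_scope.
Set Implicit Arguments. Unset Strict Implicit.

Lemma derivn_comp_shift (R : comNzRingType) (c : R) (p : {poly R}) n :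
  (p \Po ('X + c%:P)) ^`(n) = p ^`(n) \Po ('X + c%:P).
Proof.
elim: n => [//|n IH].
by rewrite !derivnS IH deriv_comp derivD derivX derivC addr0 mulr1.
Qed.

(* P_n(1) = 1: after the shift x = 1 + t, (x^2 - 1)^n = t^n (t + 2)^n, whose
   n-th derivative at t = 0 is n! 2^n, cancelling the Rodrigues constant. *)
Lemma legendre_at1 (R : realFieldType) n : (legendre R n).[1] = 1.
Proof.
have at_shift (q : {poly R}) : q.[1] = (q \Po ('X + 1%:P)).[0].
  by rewrite horner_comp !hornerE.
have shifted : ('X ^+ 2 - 1) \Po ('X + 1%:P) = 'X * ('X + 2%:R%:P) :> {poly R}.
  by rewrite comp_polyB comp_polyC comp_Xn_poly polyC_natr polyC1; ring.
rewrite /legendre hornerZ at_shift -derivn_comp_shift.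
rewrite nderivn_def hornerMn horner_coef0 coef_nderivn addn0 binn mulr1n.
rewrite rmorphXn /= shifted exprMn coefXnM ltnn subnn -horner_coef0.
rewrite horner_exp !hornerE.
have -> : 2 ^+ n *+ n`! = (2 ^ n * n`!)%:R :> R by rewrite natrM natrX mulr_natr.
by rewrite mulVf // pnatr_eq0 muln_eq0 expn_eq0 -lt0n fact_gt0.
Qed.

Lemma factor_two_roots (A : idomainType) (p : {poly A}) (a b : A) :
  a != b -> root p a -> root p b ->
  exists r, p = r * (('X - a%:P) * ('X - b%:P)).
Proof.
move=> neq_ab /factor_theorem [q ->] /rootP.
rewrite hornerM hornerXsubC => /eqP.
rewrite mulf_eq0 subr_eq0 [b == a]eq_sym (negbTE neq_ab) orbF.
move=> /eqP/rootP/factor_theorem [r ->]; exists r.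
by rewrite -mulrA [_ * (_ - a%:P)]mulrC.
Qed.

Lemma factor_roots_pm1 (A : idomainType) (p : {poly A}) :
  (1 : A) != -1 -> root p 1 -> root p (-1) -> exists r, p = r * ('X^2 - 1).
Proof.
move=> neq1 r1 rm1; have [r ->] := factor_two_roots neq1 r1 rm1.
by exists r; rewrite polyCN polyC1; congr (_ * _); ring.
Qed.

Lemma one_neq_opp1 (A : numDomainType) : (1 : A) != -1.
Proof. by rewrite -subr_eq0 opprK -mulr2n pnatr_eq0. Qed.

Lemma poly_one_neq_opp1 (A : numDomainType) : (1 : {poly A}) != -1.
Proof. by rewrite -polyC1 -polyCN (inj_eq polyC_inj) one_neq_opp1. Qed.

(* Coefficient descent: an eventually zero double sequence c satisfying the
   recurrence of the coefficients of a product by (x^2-1)(y^2-1) in the range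
   i + j > d - 4 vanishes in that whole range (induction on the distance to
   the eventual bound N). *)
Lemma coef_descent (V : zmodType) (c : nat -> nat -> V) (d : nat) :
  (exists N, forall i j, (N < i + j)%N -> c i j = 0) ->
  (forall i j, (d < i + j + 4)%N ->
     c i j - c i j.+2 - c i.+2 j + c i.+2 j.+2 = 0) ->
  forall i j, (d < i + j + 4)%N -> c i j = 0.
Proof.
move=> [N c_top] recurrence.
suff gap n : forall i j, (d < i + j + 4)%N -> (N < i + j + n)%N -> c i j = 0.
  by move=> i j lt_d; apply: (gap N.+1) => //; lia.
elim: n => [|n IH] i j lt_d lt_N; first by apply: c_top; lia.
have := recurrence i j lt_d.
rewrite (IH i j.+2) ?(IH i.+2 j) ?(IH i.+2 j.+2); try lia.
by rewrite !subr0 addr0.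
Qed.

Section Bivariate.
Variable R : realFieldType.
Implicit Types (v w : {poly {poly R}}) (m : nat).

Definition deg_x_le m v : Prop := forall i j, (m < i)%N -> coef2 v i j = 0.
Definition deg_y_le m v : Prop := forall i j, (m < j)%N -> coef2 v i j = 0.

Definition mixed_deg_le m v : Prop :=
  forall i j, (2 <= i)%N -> (2 <= j)%N -> (m < i + j)%N -> coef2 v i j = 0.

Definition bubble w : {poly {poly R}} := ('X^2 - 1)%:P * (w * ('X^2 - 1)).

Lemma eval2_restrict_x v (c y : R) :
  (map_poly (horner_eval c) v).[y] = eval2 v c y.
Proof.
have := horner_map (horner_eval c) v y%:P.
by rewrite /= /horner_eval hornerC => ->.
Qed.

Lemma size_restrict_y v m (c : R) : deg_x_le m v -> (size v.[c%:P] <= m.+1)%N.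
Proof.
move=> degx; apply/leq_sizeP => i lt_mi; rewrite horner_coef coef_sum big1 // => j _.
by rewrite -polyC_exp coefMC -/(coef2 v i j) degx ?mul0r.
Qed.

Lemma size_restrict_x v m (c : R) :
  deg_y_le m v -> (size (map_poly (horner_eval c) v) <= m.+1)%N.
Proof.
move=> degy; apply/leq_sizeP => j lt_mj; rewrite coef_map /= /horner_eval.
suff -> : v`_j = 0 by rewrite horner0.
by apply/polyP => i; rewrite coef0; apply: degy.
Qed.

Lemma vanish_on_horizontal v m (c : R) (s : seq R) :
  deg_x_le m v -> uniq s -> size s = m.+1 ->
  {in s, forall x, eval2 v x c = 0} -> v.[c%:P] = 0.
Proof.
move=> degx uniq_s size_s zero_s; apply: (roots_geq_poly_eq0 _ uniq_s).
  by apply/allP => x /zero_s /rootP.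
by rewrite size_s size_restrict_y.
Qed.

Lemma vanish_on_vertical v m (c : R) (s : seq R) :
  deg_y_le m v -> uniq s -> size s = m.+1 ->
  {in s, forall y, eval2 v c y = 0} -> map_poly (horner_eval c) v = 0.
Proof.
move=> degy uniq_s size_s zero_s; apply: (roots_geq_poly_eq0 _ uniq_s).
  by apply/allP => y /zero_s; rewrite -eval2_restrict_x => /rootP.
by rewrite size_s size_restrict_x.
Qed.

(* A polynomial vanishing on the four lines x = +-1, y = +-1 is a bubble
   multiple: first each x-coefficient column, then the y-quotient, is
   divisible by X^2 - 1. *)
Lemma factor_square_boundary v :
  map_poly (horner_eval 1) v = 0 -> map_poly (horner_eval (-1)) v = 0 ->
  v.[1] = 0 -> v.[-1] = 0 ->
  exists w, v = bubble w.
Proof.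
move=> x1 xm1 y1 ym1; set Q : {poly R} := 'X^2 - 1.
have Q_neq0 : Q != 0.
  apply: contraTneq isT => Q0; have := congr1 (horner^~ 0) Q0.
  by rewrite !hornerE expr0n /= sub0r => /eqP; rewrite oppr_eq0 oner_eq0.
have vanish_x (c : R) : map_poly (horner_eval c) v = 0 -> forall j, root v`_j c.
  by move=> vc j; have := congr1 (coefp j) vc; rewrite /= coef_map coef0 => /rootP.
pose v1 := map_poly (fun q => q %/ Q) v.
have v_eq : v = Q%:P * v1.
  apply/polyP => j; rewrite coefCM coef_map_id0 ?div0p //.
  have [r ->] := factor_roots_pm1 (one_neq_opp1 R) (vanish_x _ x1 j) (vanish_x _ xm1 j).
  by rewrite mulpK // mulrC.
have vanish_y c : v.[c] = 0 -> root v1 c.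
  by rewrite v_eq hornerCM => /eqP; rewrite mulf_eq0 (negbTE Q_neq0).
have [w v1_eq] := factor_roots_pm1 (poly_one_neq_opp1 R) (vanish_y _ y1) (vanish_y _ ym1).
by exists w; rewrite v_eq v1_eq.
Qed.

Lemma coef2_bubble w i j :
  coef2 (bubble w) i.+2 j.+2 =
  coef2 w i j - coef2 w i j.+2 - coef2 w i.+2 j + coef2 w i.+2 j.+2.
Proof.
rewrite /coef2 coefCM mulrBr mulr1 coefB coefMXn /= subn2 /=.
by rewrite mulrC mulrBr mulr1 !coefB coefMXn /= subn2 /= !coefB; ring.
Qed.

Lemma total_degree_bounded w :
  exists N, forall i j, (N < i + j)%N -> coef2 w i j = 0.
Proof.
pose M := \max_(j < size w) size (w`_j)%R.
exists (size w + M)%N => i j lt_N; rewrite /coef2.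
have [lt_j_w|le_w_j] := ltnP j (size w); last by rewrite (nth_default 0 le_w_j) coef0.
have le_M : (size (w`_j)%R <= M)%N :=
  @leq_bigmax _ (fun j : 'I_(size w) => size (w`_j)%R) (Ordinal lt_j_w).
by apply: nth_default; apply: leq_trans le_M _; lia.
Qed.

Lemma coef2_Rplus m p (a b : R) i j :
  coef2 (p + a%:P%:P * (('X ^+ m)%:P * 'X) + b%:P%:P * (('X)%:P * 'X ^+ m)) i j =
  coef2 p i j + a * ((i == m) && (j == 1%N))%:R + b * ((i == 1%N) && (j == m))%:R.
Proof.
rewrite /coef2 !coefD !coefCM coefX coefXn.
congr (_ + _ * _ + _ * _).
  by case: (j == 1%N); rewrite /= ?mulr1 ?mulr0 ?coefXn ?coef0 ?andbT ?andbF.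
by case: (j == m); rewrite /= ?mulr1 ?mulr0 ?coefX ?coef0 ?andbT ?andbF.
Qed.

(* Degree information on R_m^+: the extra monomials x^m y and x y^m have
   partial degrees <= m and are not mixed monomials. *)
Lemma Rplus_degrees m v : (2 <= m)%N -> in_Rplus m v ->
  [/\ deg_x_le m v, deg_y_le m v & mixed_deg_le m v].
Proof.
move=> le2m [p [a [b [p_deg ->]]]].
split=> [i j lt_m | i j lt_m | i j le2i le2j lt_m]; rewrite coef2_Rplus p_deg; try lia.
- have /negbTE -> : i != m by lia.
  have /negbTE -> : i != 1%N by lia.
  by rewrite !mulr0 !addr0.
- have /negbTE -> : j != m by lia.
  have /negbTE -> : j != 1%N by lia.
  by rewrite !andbF !mulr0 !addr0.
- have /negbTE -> : j != 1%N by lia.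
  have /negbTE -> : i != 1%N by lia.
  by rewrite !andbF !mulr0 !addr0.
Qed.

Lemma bubble_quotient_degree m w : mixed_deg_le m (bubble w) ->
  forall i j, (m < i + j + 4)%N -> coef2 w i j = 0.
Proof.
move=> mixed; apply: coef_descent (total_degree_bounded w) _ => i j lt_m.
by rewrite -coef2_bubble mixed //; lia.
Qed.

Lemma bubble_vanish_interior w (pt : R * R) :
  interior pt -> eval2 (bubble w) pt.1 pt.2 = 0 -> eval2 w pt.1 pt.2 = 0.
Proof.
case: pt => x y; rewrite /interior /= => /andP [/andP [x_gt x_lt] /andP [y_gt y_lt]].
rewrite /eval2 /bubble hornerCM hornerM !hornerE => /eqP.
rewrite !mulf_eq0 => /orP [/orP [x_root | /eqP //] | y_root]; exfalso.
- by move/eqP: x_root; nra.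
- by move/eqP: y_root; nra.
Qed.

Lemma mem_Gplus (g : seq R) t : t \in g ->
  [/\ (1, t) \in Gplus g, (-1, t) \in Gplus g, (t, 1) \in Gplus g & (t, -1) \in Gplus g].
Proof. by move=> g_t; split; apply/flatten_mapP; exists t; rewrite ?inE ?eqxx ?orbT. Qed.

Lemma boundary_factor m (g : seq R) v :
  uniq g -> 1 \notin g -> size g = m -> deg_x_le m v -> deg_y_le m v ->
  {in Gplus g, forall pt, eval2 v pt.1 pt.2 = 0} -> eval2 v 1 1 = 0 ->
  exists w, v = bubble w.
Proof.
move=> uniq_g notin1 size_g degx degy zero_G zero_11.
have uniq_s : uniq (1 :: g) by rewrite /= notin1.
have size_s : size (1 :: g) = m.+1 by rewrite /= size_g.
have on_G t : t \in g -> [/\ eval2 v 1 t = 0, eval2 v (-1) t = 0,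
                              eval2 v t 1 = 0 & eval2 v t (-1) = 0].
  by case/mem_Gplus => /zero_G ? /zero_G ? /zero_G ? /zero_G ?.
have x1 : map_poly (horner_eval 1) v = 0.
  apply: (vanish_on_vertical degy uniq_s size_s) => y; rewrite in_cons.
  by case/predU1P => [-> // | /on_G []].
have y1 : v.[1%:P] = 0.
  apply: (vanish_on_horizontal degx uniq_s size_s) => x; rewrite in_cons.
  by case/predU1P => [-> // | /on_G []].
have xm1 : map_poly (horner_eval (-1)) v = 0.
  apply: (vanish_on_vertical degy uniq_s size_s) => y; rewrite in_cons.
  by case/predU1P => [-> | /on_G [] //]; rewrite /eval2 y1 horner0.
have ym1 : v.[(-1)%:P] = 0.
  apply: (vanish_on_horizontal degx uniq_s size_s) => x; rewrite in_cons.
  by case/predU1P => [-> | /on_G [] //]; rewrite -eval2_restrict_x x1 horner0.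
by apply: factor_square_boundary; rewrite -?polyC1 -?polyCN.
Qed.
End Bivariate.

Theorem mainTheorem6 (R : realFieldType) (k : nat) (g : seq R)
    (I : seq (R * R)) (v : {poly {poly R}}) :
  (1 <= k)%N ->
  uniq g -> size g = (2 * k)%N -> all (root (legendre R (2 * k))) g ->
  size I = ((2 * k - 3) * (k - 1))%N -> all (@interior R) I ->
  ((2 <= k)%N -> unisolvent (2 * k - 4) I) ->
  in_Rplus (2 * k) v ->
  (forall pt, pt \in Gplus g ++ I ++ [:: (1, 1)] -> eval2 v pt.1 pt.2 = 0) ->
  v = 0.
Proof.
move=> k_ge1 uniq_g size_g roots_g _ interior_I unisolvent_I v_Rplus zero_v.
have le2m : (2 <= 2 * k)%N by lia.
have [degx degy v_mixed] := Rplus_degrees le2m v_Rplus.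
have one_notin_g : 1 \notin g.
  by apply/negP => /(allP roots_g); rewrite /root legendre_at1 oner_eq0.
have [w v_eq] : exists w, v = bubble w.
  apply: (boundary_factor uniq_g one_notin_g size_g degx degy).
  - by move=> pt G_pt; apply: zero_v; rewrite mem_cat G_pt.
  - by apply: (zero_v (1, 1)); rewrite !mem_cat mem_head !orbT.
have w_deg : forall i j, (2 * k < i + j + 4)%N -> coef2 w i j = 0.
  by apply: bubble_quotient_degree; rewrite -v_eq.
suff w0 : w = 0 by rewrite v_eq w0 /bubble mul0r mulr0.
have [k_ge2 | k_le1] := ltnP 1 k; last first.
  by apply/polyP => j; apply/polyP => i; rewrite !coef0; apply: w_deg; lia.
apply: (unisolvent_I k_ge2) => [i j lt_ij | i j _ | pt I_pt].
- by apply: w_deg; lia.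
- by rewrite /coef2 !coef0.
- rewrite [eval2 0 _ _]/eval2 !horner0.
  apply: bubble_vanish_interior (allP interior_I _ I_pt) _; rewrite -v_eq.
  by apply: zero_v; rewrite !mem_cat I_pt orbT.
Qed.
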